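(* Let $f:\mathbb{R}^d\to\mathbb{R}$ be convex, twice continuously differentiable with $\nabla^2 f(x)\succ0$ for all $x$, and $L_{\text{semi}}$-semi-strongly self-concordant, and let $L_{\text{est}}\ge L_{\text{semi}}$. Then for every $x\in\mathbb{R}^d$, $$f\big(S_{f,L_{\text{est}}}(x)\big)\le\min_{y\in\mathbb{R}^d}\Big\{f(y)+\frac{L_{\text{est}}}{3}\|y-x\|_x^3\Big\}.$$
   Context: Local norms: $\|h\|_x=\langle\nabla^2 f(x)h,h\rangle^{1/2}$, $\|g\|_x^*=\langle g,[\nabla^2 f(x)]^{-1}g\rangle^{1/2}$; for a linear operator $H$ and base point $x$, $\|H\|_{op}=\sup_{v\neq0}\|Hv\|_x^*/\|v\|_x$. $f$ is $L_{\text{semi}}$-semi-strongly self-concordant if $\|\nabla^2 f(y)-\nabla^2 f(x)\|_{op}\le L_{\text{semi}}\|y-x\|_x$ for all $x,y$ (operator norm at base point $x$). $S_{f,L}(x)=x+\arg\min_{h}\{f(x)+\langle\nabla f(x),h\rangle+\frac12\langle\nabla^2f(x)h,h\rangle+\frac L6\|h\|_x^3\}$ (the minimizer exists and is unique since the objective is strictly convex and coercive). *)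

From HB Require Import structures.
From mathcomp Require Import all_boot all_order all_algebra.
From mathcomp Require Import all_classical all_reals all_analysis.
Set Implicit Arguments. Unset Strict Implicit. Unset Printing Implicit Defensive.
Import Order.TTheory GRing.Theory Num.Theory.
Import numFieldNormedType.Exports.
Local Open Scope ring_scope.

Section Defs.
Variables (R : realType) (d : nat).
Notation V := 'rV[R]_d.

Definition dotp (u v : V) : R := (u *m v^T) 0 0.

(* Action of a d x d matrix A on a vector h (column convention: A h). *)
Definition mxapp (A : 'M[R]_d) (h : V) : V := h *m A^T.

Definition has_gradient (f : V -> R) (g : V -> V) : Prop :=
  forall x, differentiable f x /\ forall h, 'd f x h = dotp (g x) h.

Definition has_hessian (g : V -> V) (H : V -> 'M[R]_d) : Prop :=
  forall x, differentiable g x /\ forall h, 'd g x h = mxapp (H x) h.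

Definition convex_fun (f : V -> R) : Prop :=
  forall (x y : V) (t : R), 0 <= t <= 1 ->
    f (t *: x + (1 - t) *: y) <= t * f x + (1 - t) * f y.

Definition posdef (A : 'M[R]_d) : Prop :=
  forall h : V, h != 0 -> 0 < dotp (mxapp A h) h.

Definition lnorm (A : 'M[R]_d) (h : V) : R := Num.sqrt (dotp (mxapp A h) h).
Definition dnorm (A : 'M[R]_d) (g : V) : R := Num.sqrt (dotp g (mxapp (invmx A) g)).

(* Semi-strong self-concordance: ||H(y) - H(x)||_op <= L ||y - x||_x, where the
   operator norm at x is sup_{v<>0} ||(H(y)-H(x)) v||_x^* / ||v||_x;
   the bound on the sup is written out pointwise. *)
Definition semi_strongly_sc (H : V -> 'M[R]_d) (L : R) : Prop :=
  forall x y v : V,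
    dnorm (H x) (mxapp (H y - H x) v) <= L * lnorm (H x) (y - x) * lnorm (H x) v.

Definition cubic_model (f : V -> R) (g : V -> V) (H : V -> 'M[R]_d) (L : R)
    (x h : V) : R :=
  f x + dotp (g x) h + 2^-1 * dotp (mxapp (H x) h) h + L / 6 * lnorm (H x) h ^+ 3.

(* h is the (unique) minimizer of the model, so S_{f,L}(x) = x + h. *)
Definition is_cubic_step (f : V -> R) (g : V -> V) (H : V -> 'M[R]_d) (L : R)
    (x h : V) : Prop :=
  forall h' : V, cubic_model f g H L x h <= cubic_model f g H L x h'.

End Defs.

From HB Require Import structures.
From mathcomp Require Import all_boot all_order all_algebra.
From mathcomp Require Import all_classical all_reals all_analysis.
From mathcomp Require Import ring lra.
Set Implicit Arguments. Unset Strict Implicit. Unset Printing Implicit Defensive.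
Import Order.TTheory GRing.Theory Num.Theory.
Import numFieldNormedType.Exports.
Local Open Scope ring_scope.

(* Along a segment x + t u, the semi-strong self-concordance bound and the
   Cauchy-Schwarz inequality for the pair (||.||_x, ||.||_x^* ) give
   |<H(x+tu)u,u> - <H(x)u,u>| <= L t ||u||_x^3; integrating twice yields
   |f(x+u) - (f(x) + <g(x),u> + <H(x)u,u>/2)| <= L/6 ||u||_x^3.
   The upper half says f(x + h) is at most the cubic model at h, which by
   minimality is at most the model at y - x, and the lower half bounds that
   by f(y) + L/3 ||y - x||_x^3.  Cauchy-Schwarz needs the symmetry of the
   Hessian, which follows from the continuity of H (Schwarz's theorem). *)

Section RealCalculus.
Context {R : realType}.
Implicit Types (phi D : R -> R).

Lemma MVT_derive phi D (a b : R) : a <= b ->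
  (forall t, is_derive t (1 : R) phi (D t)) ->
  exists2 c, a <= c <= b & phi b - phi a = D c * (b - a).
Proof.
move=> ab dphi; have [|c cab E] := MVT_segment ab (fun t _ => dphi t).
  apply: continuous_subspaceT => t; apply: differentiable_continuous.
  by apply/derivable1_diffP; have [] := dphi t.
by exists c => //; move: cab; rewrite in_itv.
Qed.

Lemma ler0_derive_le phi D (a b : R) : a <= b ->
  (forall t, is_derive t (1 : R) phi (D t)) ->
  (forall t, a <= t <= b -> D t <= 0) -> phi b <= phi a.
Proof.
move=> ab dphi D_le0; have [c cab E] := MVT_derive ab dphi.
by rewrite -subr_le0 E mulr_le0_ge0 ?D_le0 // subr_ge0.
Qed.

Lemma taylor2_le (p0 p1 p2 : R -> R) (A K : R) :
  (forall t, is_derive t (1 : R) p0 (p1 t)) ->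
  (forall t, is_derive t (1 : R) p1 (p2 t)) ->
  (forall t, 0 <= t <= 1 -> p2 t <= A + K * t) ->
  p0 1 <= p0 0 + p1 0 + A / 2 + K / 6.
Proof.
move=> d0 d1 p2_le.
pose q1 s := p1 s - p1 0 - A * s - K / 2 * s ^+ 2.
pose q0 s := p0 s - p0 0 - p1 0 * s - A / 2 * s ^+ 2 - K / 6 * s ^+ 3.
have dq1 t : is_derive t (1 : R) q1 (p2 t - A - K * t).
  have -> : q1 = p1 - cst (p1 0) - A \*: id - (K / 2) \*: (@id R) ^+ 2 by [].
  apply: is_derive_eq.
  by rewrite subr0 expr1 /GRing.scale /= !mulr1 mulrA divfK ?pnatr_eq0.
have dq0 t : is_derive t (1 : R) q0 (q1 t).
  have -> : q0 = p0 - cst (p0 0) - (p1 0) \*: id - (A / 2) \*: (@id R) ^+ 2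
                 - (K / 6) \*: (@id R) ^+ 3 by [].
  by apply: is_derive_eq; rewrite /q1 /GRing.scale /= !mulr1 subr0 expr1; field.
have q1_le0 t : 0 <= t <= 1 -> q1 t <= 0.
  move=> /andP[t0 t1]; have -> : 0 = q1 0 by rewrite /q1 expr0n /=; ring.
  apply: (ler0_derive_le t0 dq1) => s /andP[s0 st].
  by have := p2_le s; rewrite s0 (le_trans st t1) => /(_ isT); lra.
have : q0 1 <= q0 0 by apply: (ler0_derive_le ler01 dq0) => s /q1_le0.
by rewrite /q0 !expr1n !expr0n /=; lra.
Qed.

Lemma taylor2_abs_le (p0 p1 p2 : R -> R) (A K : R) :
  (forall t, is_derive t (1 : R) p0 (p1 t)) ->
  (forall t, is_derive t (1 : R) p1 (p2 t)) ->
  (forall t, 0 <= t <= 1 -> `|p2 t - A| <= K * t) ->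
  `|p0 1 - (p0 0 + p1 0 + A / 2)| <= K / 6.
Proof.
move=> d0 d1 p2_near.
have up : p0 1 <= p0 0 + p1 0 + A / 2 + K / 6.
  by apply: taylor2_le d0 d1 _ => t /p2_near; rewrite ler_norml; lra.
have lo : - p0 1 <= - p0 0 + - p1 0 + - A / 2 + K / 6.
  apply: (@taylor2_le (fun s => - p0 s) (fun s => - p1 s) (fun s => - p2 s)
    _ _ (fun t => is_deriveN (d0 t)) (fun t => is_deriveN (d1 t))).
  by move=> t /p2_near; rewrite ler_norml; lra.
by rewrite ler_norml; lra.
Qed.

End RealCalculus.

Section LocalNorms.
Context {R : realType} {d : nat}.
Notation V := 'rV[R]_d.
Implicit Types (a b c u v w : V) (A B : 'M[R]_d).

Definition symmetric_form A := forall u v, dotp (mxapp A u) v = dotp (mxapp A v) u.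

Lemma dotpDl a b c : dotp (a + b) c = dotp a c + dotp b c.
Proof. by rewrite /dotp mulmxDl mxE. Qed.

Lemma dotpZl (k : R) a c : dotp (k *: a) c = k * dotp a c.
Proof. by rewrite /dotp -scalemxAl mxE. Qed.

Lemma dotpNl a c : dotp (- a) c = - dotp a c.
Proof. by rewrite -scaleN1r dotpZl mulN1r. Qed.

Lemma dotpBl a b c : dotp (a - b) c = dotp a c - dotp b c.
Proof. by rewrite dotpDl dotpNl. Qed.

Lemma dotpC a b : dotp a b = dotp b a.
Proof. by rewrite /dotp -{1}(trmxK a) -trmx_mul mxE. Qed.

Lemma dotpBr a b c : dotp c (a - b) = dotp c a - dotp c b.
Proof. by rewrite dotpC dotpBl !(dotpC c). Qed.

Lemma dotpZr (k : R) a c : dotp c (k *: a) = k * dotp c a.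
Proof. by rewrite dotpC dotpZl dotpC. Qed.

Lemma mxappZ A (k : R) u : mxapp A (k *: u) = k *: mxapp A u.
Proof. by rewrite /mxapp scalemxAl. Qed.

Lemma mxappB A u v : mxapp A (u - v) = mxapp A u - mxapp A v.
Proof. by rewrite /mxapp mulmxBl. Qed.

Lemma mxappBl A B u : mxapp (A - B) u = mxapp A u - mxapp B u.
Proof. by rewrite /mxapp linearB /= mulmxBr. Qed.

Lemma posdef_unitmx A : posdef A -> A \in unitmx.
Proof.
move=> pA; rewrite -unitmx_tr -row_free_unit; apply: inj_row_free => v v0.
apply/eqP/negPn/negP => /pA; by rewrite /mxapp v0 /dotp mul0mx mxE ltxx.
Qed.

Lemma posdef_form_ge0 A v : posdef A -> 0 <= dotp (mxapp A v) v.
Proof.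
move=> pA; have [->|/pA/ltW //] := eqVneq v 0.
by rewrite /dotp trmx0 mulmx0 mxE.
Qed.

Lemma le_sqrt_of_quadratic_ge0 (a c e : R) : 0 <= a -> 0 <= e ->
  (forall l, 0 <= l ^+ 2 * a - 2 * l * c + e) -> c <= Num.sqrt a * Num.sqrt e.
Proof.
move=> a0 e0 quad_ge0.
have [c_le0|c_gt0] := leP c 0; first by rewrite (le_trans c_le0) ?mulr_ge0 ?sqrtr_ge0.
have [a_le0|a_gt0] := leP a 0.
  have a_eq0 : a = 0 by apply/eqP; rewrite eq_le a_le0 a0.
  have := quad_ge0 ((e + 1) / (2 * c)).
  have -> : ((e + 1) / (2 * c)) ^+ 2 * a - 2 * ((e + 1) / (2 * c)) * c + e = - 1.
    by rewrite a_eq0; field; lra.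
  lra.
have c2_le : c ^+ 2 <= a * e.
  have := quad_ge0 (c / a).
  have -> : (c / a) ^+ 2 * a - 2 * (c / a) * c + e = e - c ^+ 2 / a by field; lra.
  by rewrite subr_ge0 ler_pdivrMr // mulrC.
rewrite -sqrtrM //; have -> : c = Num.sqrt (c ^+ 2) by rewrite sqrtr_sqr gtr0_norm.
exact: ler_wsqrtr.
Qed.

Lemma dotp_le_dnorm_lnorm A w u : posdef A -> symmetric_form A ->
  dotp w u <= dnorm A w * lnorm A u.
Proof.
move=> pA sA; set b := mxapp (invmx A) w.
have wE : w = mxapp A b.
  by rewrite /b /mxapp -mulmxA -trmx_mul mulmxV ?posdef_unitmx // trmx1 mulmx1.
rewrite /dnorm -/b {1}wE /lnorm wE.
apply: le_sqrt_of_quadratic_ge0; rewrite ?posdef_form_ge0 // => l.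
have := posdef_form_ge0 (l *: b - u) pA.
rewrite mxappB !mxappZ !dotpBl !dotpBr !dotpZl !dotpZr (sA u b); lra.
Qed.

Lemma lnorm_ge0 A u : 0 <= lnorm A u.
Proof. exact: sqrtr_ge0. Qed.

Lemma lnormZ A (k : R) u : lnorm A (k *: u) = `|k| * lnorm A u.
Proof.
by rewrite /lnorm mxappZ dotpZl dotpZr mulrA -expr2 sqrtrM ?sqr_ge0 // sqrtr_sqr.
Qed.

Lemma semi_sc_hessian_form_le (H : V -> 'M[R]_d) (L : R) x u (t : R) :
  posdef (H x) -> symmetric_form (H x) -> semi_strongly_sc H L -> 0 <= t ->
  `|dotp (mxapp (H (x + t *: u)) u) u - dotp (mxapp (H x) u) u|
    <= L * t * lnorm (H x) u ^+ 3.
Proof.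
move=> pHx sHx scH t0.
have form_le v : lnorm (H x) v = lnorm (H x) u ->
    dotp (mxapp (H (x + t *: u) - H x) v) u <= L * t * lnorm (H x) u ^+ 3.
  move=> vu; apply: le_trans (dotp_le_dnorm_lnorm _ _ pHx sHx) _.
  apply: le_trans (ler_wpM2r (lnorm_ge0 _ _) (scH x (x + t *: u) v)) _.
  by rewrite addrC addKr lnormZ ger0_norm // vu le_eqVlt -!mulrA eqxx.
(* v = u and v = -u give the two sides of the absolute value. *)
have := form_le u erefl; have := form_le ((-1) *: u).
rewrite lnormZ normrN1 mul1r mxappZ dotpZl !mxappBl !dotpBl => /(_ erefl).
by rewrite ler_norml; lra.
Qed.

End LocalNorms.

Section DirectionalDerivatives.
Context {R : realType} {d : nat}.
Notation V := 'rV[R]_d.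

Lemma is_derive_line (W : normedModType R) (F : V -> W) (a u : V) (t : R) :
  differentiable F (a + t *: u) ->
  is_derive t 1 (fun s => F (a + s *: u)) ('d F (a + t *: u) u).
Proof.
move=> dF.
have E : (fun h : R => h^-1 *: (((fun s => F (a + s *: u)) \o shift t) (h *: 1)
            - F (a + t *: u)))
       = (fun h : R => h^-1 *: ((F \o shift (a + t *: u)) (h *: u) - F (a + t *: u))).
  apply/funext => h /=; congr (_ *: (F _ - _)).
  by rewrite /shift /= [h%:A]mulr1 scalerDl addrCA addrA.
split; first by rewrite /derivable E; exact: diff_derivable.
by rewrite -deriveE // /derive E.
Qed.

Lemma is_derive_dotpl (G : R -> V) (t : R) (D w : V) :
  is_derive t 1 G D -> is_derive t 1 (fun s => dotp (G s) w) (dotp D w).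
Proof.
move=> [dG DE].
have dGij i j : is_derive t 1 (fun s => G s i j) (D i j).
  by split; [exact: (derivable_mxP _ _ _).1 dG i j | rewrite -DE derive_mx // mxE].
have -> : (fun s => dotp (G s) w) = \sum_(j < d) (fun s => w 0 j * G s 0 j).
  apply/funext => s; rewrite /dotp mxE fct_sumE.
  by apply: eq_bigr => j _; rewrite !mxE mulrC.
have -> : dotp D w = \sum_(j < d) w 0 j * D 0 j.
  by rewrite /dotp mxE; apply: eq_bigr => j _; rewrite !mxE mulrC.
exact: is_derive_sum.
Qed.

Variables (f : V -> R) (g : V -> V) (H : V -> 'M[R]_d).
Hypotheses (fg : has_gradient f g) (gH : has_hessian g H).

Lemma is_derive_f_line a u t :
  is_derive t (1 : R) (fun s => f (a + s *: u)) (dotp (g (a + t *: u)) u).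
Proof. by have [df <-] := fg (a + t *: u); exact: is_derive_line. Qed.

Lemma is_derive_g_line a u w t :
  is_derive t (1 : R) (fun s => dotp (g (a + s *: u)) w)
    (dotp (mxapp (H (a + t *: u)) u) w).
Proof.
apply: is_derive_dotpl; have [dg <-] := gH (a + t *: u); exact: is_derive_line.
Qed.

Lemma semi_sc_taylor (L : R) x u :
  posdef (H x) -> symmetric_form (H x) -> semi_strongly_sc H L ->
  `|f (x + u) - (f x + dotp (g x) u + 2^-1 * dotp (mxapp (H x) u) u)|
    <= L / 6 * lnorm (H x) u ^+ 3.
Proof.
move=> pHx sHx scH; set q := dotp (mxapp (H x) u) u.
rewrite mulrAC (mulrC _ q).
have := taylor2_abs_le (is_derive_f_line x u) (is_derive_g_line x u u)
  (A := q) (K := L * lnorm (H x) u ^+ 3).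
rewrite !scale1r !scale0r !addr0; apply => t /andP[t0 _].
by rewrite mulrAC; exact: semi_sc_hessian_form_le.
Qed.

Lemma second_difference_mvt x u v (e : R) : 0 <= e ->
  exists s r : R, [/\ 0 <= s <= e, 0 <= r <= e &
    f (x + e *: v + e *: u) - f (x + e *: u) - f (x + e *: v) + f x =
      e ^+ 2 * dotp (mxapp (H (x + s *: u + r *: v)) v) u].
Proof.
move=> e0.
pose a s := f (x + e *: v + s *: u) - f (x + s *: u).
have da t : is_derive t (1 : R) a
    (dotp (g (x + e *: v + t *: u)) u - dotp (g (x + t *: u)) u).
  exact: is_deriveB (is_derive_f_line _ _ t) (is_derive_f_line _ _ t).
have [s /andP[s0 se] Ea] := MVT_derive e0 da.
have [r /andP[r0 re] Eb] := MVT_derive e0 (is_derive_g_line (x + s *: u) v u).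
exists s, r; split; rewrite ?s0 ?se ?r0 ?re //.
transitivity (a e - a 0); first by rewrite /a !scale0r !addr0; ring.
rewrite Ea subr0 (addrAC x (e *: v)).
by move: Eb; rewrite scale0r addr0 subr0 => ->; ring.
Qed.

End DirectionalDerivatives.

Section HessianSymmetry.
Context {R : realType} {d : nat}.
Notation V := 'rV[R]_d.

Lemma continuous_hessian_form (H : V -> 'M[R]_d) (a b : V) :
  (forall i j, continuous (fun x => H x i j)) ->
  continuous (fun y => dotp (mxapp (H y) a) b).
Proof.
move=> Hc.
have -> : (fun y => dotp (mxapp (H y) a) b) =
    (fun y => \sum_(j < d) \sum_(k < d) a 0 k * b 0 j * H y j k).
  apply/funext => y; rewrite /dotp /mxapp mxE; apply: eq_bigr => j _.
  by rewrite !mxE big_distrl /=; apply: eq_bigr => k _; rewrite !mxE; ring.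
apply: continuous_big => [|j _]; first exact: add_continuous.
apply: continuous_big => [|k _]; first exact: add_continuous.
by move=> y; apply: (@continuousM _ _ (cst _) (fun y => H y j k)); [exact: cst_continuous | exact: Hc].
Qed.

Lemma norm_scale2_lt (a b : V) (s r e del : R) :
  0 <= s <= e -> 0 <= r <= e -> e * (`|a| + `|b|) < del -> `|s *: a + r *: b| < del.
Proof.
move=> /andP[s0 se] /andP[r0 re]; apply: le_lt_trans.
apply: le_trans (ler_normD _ _) _; rewrite !normrZ !ger0_norm // mulrDr.
by rewrite lerD // ler_wpM2r.
Qed.

Lemma hessian_symmetric (f : V -> R) (g : V -> V) (H : V -> 'M[R]_d) :
  has_gradient f g -> has_hessian g H ->
  (forall i j, continuous (fun x => H x i j)) -> forall x, symmetric_form (H x).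
Proof.
move=> fg gH Hc x u v.
pose p1 z := dotp (mxapp (H z) v) u; pose p2 z := dotp (mxapp (H z) u) v.
apply/eqP; rewrite -subr_eq0; apply/negPn/negP => neq.
set D := _ - _ in neq.
have D0 : 0 < `|D| / 2 by rewrite divr_gt0 // normr_gt0.
have near_p1 : \forall z \near x, `|p1 x - p1 z| < `|D| / 2.
  exact: (@cvgr_dist_lt _ _ _ _ _ p1 _ (@continuous_hessian_form H v u Hc x) _ D0).
have near_p2 : \forall z \near x, `|p2 x - p2 z| < `|D| / 2.
  exact: (@cvgr_dist_lt _ _ _ _ _ p2 _ (@continuous_hessian_form H u v Hc x) _ D0).
have [del del0 p_near] := (nbhs_normP _ _).1 (filterI near_p1 near_p2).
pose e := del / (2 * (`|u| + `|v| + 1)).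
have nuv : 0 < `|u| + `|v| + 1 by rewrite ltr_wpDl // addr_ge0.
have e0 : 0 < e by rewrite divr_gt0 // mulr_gt0.
have e_small : e * (`|u| + `|v|) < del.
  have uv0 : 0 <= `|u| + `|v| by rewrite addr_ge0.
  by rewrite /e mulrAC ltr_pdivrMr ?mulr_gt0 // ltr_pM2l //; lra.
have close s r (a b : V) : 0 <= s <= e -> 0 <= r <= e ->
    `|a| + `|b| = `|u| + `|v| -> ball_ Num.norm x del (x + s *: a + r *: b).
  move=> se re ab; rewrite /ball_ /= -addrA opprD addrA subrr sub0r normrN.
  by apply: norm_scale2_lt se re _; rewrite ab.
have [s [r [se re Er]]] := second_difference_mvt fg gH x u v (ltW e0).
have [s' [r' [se' re' Er']]] := second_difference_mvt fg gH x v u (ltW e0).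
(* Both are the same second difference of f, expanded in either order. *)
have : e ^+ 2 * p1 (x + s *: u + r *: v) = e ^+ 2 * p2 (x + s' *: v + r' *: u).
  by rewrite /p1 /p2 -Er -Er' (addrAC x (e *: v)); ring.
move/mulfI => /(_ (expf_neq0 2 (lt0r_neq0 e0))) E.
have [h1 _] := p_near _ (close _ _ _ _ se re erefl).
have [_ h2] := p_near _ (close _ _ _ _ se' re' (addrC _ _)).
move: h1 h2; rewrite E -/(p1 x) -/(p2 x) => h1 h2.
have : `|D| <= `|p2 x - p2 (x + s' *: v + r' *: u)| + `|p1 x - p2 (x + s' *: v + r' *: u)|.
  have -> : D = (p2 x - p2 (x + s' *: v + r' *: u)) - (p1 x - p2 (x + s' *: v + r' *: u)).
    by rewrite /D /p1 /p2; ring.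
  exact: ler_normB.
lra.
Qed.

End HessianSymmetry.

Section CubicModel.
Context {R : realType} {d : nat}.
Notation V := 'rV[R]_d.
Variables (f : V -> R) (g : V -> V) (H : V -> 'M[R]_d) (Lsemi L : R) (x : V).
Hypotheses (fg : has_gradient f g) (gH : has_hessian g H) (pHx : posdef (H x))
  (sHx : symmetric_form (H x)) (scH : semi_strongly_sc H Lsemi) (LsemiL : Lsemi <= L).

Let taylor_gap u :
  `|f (x + u) - (f x + dotp (g x) u + 2^-1 * dotp (mxapp (H x) u) u)|
    <= L / 6 * lnorm (H x) u ^+ 3.
Proof.
apply: le_trans (semi_sc_taylor fg gH u pHx sHx scH) _.
by rewrite ler_wpM2r ?exprn_ge0 ?lnorm_ge0 ?ler_pM2r.
Qed.

Lemma le_cubic_model u : f (x + u) <= cubic_model f g H L x u.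
Proof. by have := taylor_gap u; rewrite /cubic_model ler_norml; lra. Qed.

Lemma cubic_model_le u :
  cubic_model f g H L x u <= f (x + u) + L / 3 * lnorm (H x) u ^+ 3.
Proof. by have := taylor_gap u; rewrite /cubic_model ler_norml; lra. Qed.

End CubicModel.

Theorem lemma5 (R : realType) (d : nat) (f : 'rV[R]_d -> R)
    (g : 'rV[R]_d -> 'rV[R]_d) (H : 'rV[R]_d -> 'M[R]_d) (Lsemi Lest : R) :
  convex_fun f ->
  has_gradient f g ->
  has_hessian g H ->
  (forall i j, continuous (fun x => H x i j)) ->
  (forall x, posdef (H x)) ->
  semi_strongly_sc H Lsemi ->
  Lsemi <= Lest ->
  forall x h : 'rV[R]_d, is_cubic_step f g H Lest x h ->
  forall y : 'rV[R]_d,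
    f (x + h) <= f y + Lest / 3 * lnorm (H x) (y - x) ^+ 3.
Proof.
move=> _ fg gH Hc pH scH LsemiL x h h_min y.
have sHx := hessian_symmetric fg gH Hc x.
apply: le_trans (le_cubic_model fg gH (pH x) sHx scH LsemiL h) _.
apply: le_trans (h_min (y - x)) _.
by have := cubic_model_le fg gH (pH x) sHx scH LsemiL (y - x); rewrite subrKC.
Qed.
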